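(* Let $G=(V,E)$ be a simple undirected graph with $V=[n]$ such that $|V|=\chi(\bar G)\,\chi(G)$. Then for every integer $k$ with $1\le k\le\chi(G)$, $$\vartheta_k(G)=\vartheta'_k(G)=\theta^1_k(G)=\theta^2_k(G)=\theta^3_k(G)=k\,\alpha(G)=\alpha_k(G).$$
   Context: $\chi(G)$ is the chromatic number of $G$ and $\bar G$ its complement. $\alpha(G)$ is the stability number; $\alpha_k(G)$ is the maximum number of vertices of an induced $k$-colorable subgraph of $G$. $J$ is the all-ones matrix, $\langle A,B\rangle=\mathrm{trace}(AB)$, $\ge0$ entrywise, $\succeq0$ positive semidefinite, $\mathbb S^n$ symmetric $n\times n$ matrices. $\vartheta_k(G)=\max\{\langle J,Z\rangle: Z\in\mathbb S^n,\ Z_{ij}=0\ (\{i,j\}\in E),\ \langle I,Z\rangle=k,\ Z\succeq0,\ I-Z\succeq0\}$, and $\vartheta'_k(G)$ is the same with the additional constraint $Z\ge0$. $\theta^1_k(G)=\max\langle I,Z\rangle$ over $Z,X\in\mathbb S^n$ subject to $Z_{ij}=0$ for $\{i,j\}\in E$; $X_{ii}=0$ for $i\in[n]$; $Z,X\ge0$; $Z-X\succeq0$; $\begin{bmatrix}1&\mathrm{diag}(Z)^{\top}\\ \mathrm{diag}(Z)&Z+(k-1)X\end{bmatrix}\succeq0$; $1-Z_{ii}-Z_{jj}+Z_{ij}+(k-1)X_{ij}\ge0$ for $i>j$; $Z_{ii}-Z_{ij}-(k-1)X_{ij}\ge0$ for $i\ne j$. $\theta^2_k(G)$ is the optimal value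 of the same problem without the last two families of linear inequalities. $\theta^3_k(G)=\max\{\langle I,Z\rangle: Z\in\mathbb S^n,\ Z_{ij}=0\ (\{i,j\}\in E),\ Z_{ii}\le1,\ Z\ge0,\ \begin{bmatrix}k&\mathrm{diag}(Z)^{\top}\\ \mathrm{diag}(Z)&Z\end{bmatrix}\succeq0\}$. *)

From HB Require Import structures.
From mathcomp Require Import all_boot all_order all_algebra.
From mathcomp Require Import classical_sets reals.
Set Implicit Arguments. Unset Strict Implicit. Unset Printing Implicit Defensive.
Import Order.TTheory GRing.Theory Num.Theory.
Local Open Scope ring_scope.
Local Open Scope classical_set_scope.

Definition simple_graph (n : nat) (e : rel 'I_n) : Prop :=
  symmetric e /\ irreflexive e.

Definition compl_graph (n : nat) (e : rel 'I_n) : rel 'I_n :=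
  [rel i j | (i != j) && ~~ e i j].

Definition proper_on (n k : nat) (e : rel 'I_n) (S : {set 'I_n})
  (f : {ffun 'I_n -> 'I_k}) : bool :=
  [forall i, forall j, ((i \in S) && (j \in S) && e i j) ==> (f i != f j)].

Definition colorable (n : nat) (e : rel 'I_n) (k : nat) : bool :=
  [exists f : {ffun 'I_n -> 'I_k}, proper_on e [set: 'I_n] f].

(* Chromatic number: the least k such that G is k-colorable.  For a loopless
   graph on n vertices, n colors always suffice, so searching in 0..n is exact. *)
Definition chi (n : nat) (e : rel 'I_n) : nat :=
  find (colorable e) (iota 0 n.+1).

Definition stable (n : nat) (e : rel 'I_n) (S : {set 'I_n}) : bool :=
  [forall i, forall j, ((i \in S) && (j \in S)) ==> ~~ e i j].

Definition alpha (n : nat) (e : rel 'I_n) : nat :=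
  \max_(S : {set 'I_n} | stable e S) #|S|.

Definition alpha_k (n : nat) (e : rel 'I_n) (k : nat) : nat :=
  \max_(S : {set 'I_n} | [exists f : {ffun 'I_n -> 'I_k}, proper_on e S f]) #|S|.

Section SDP.
Variable R : realType.

Definition symmx (m : nat) (A : 'M[R]_m) : Prop := A^T = A.

Definition psd (m : nat) (A : 'M[R]_m) : Prop :=
  symmx A /\ forall x : 'cV[R]_m, 0 <= (x^T *m A *m x) 0 0.

Definition nonneg_mx (m : nat) (A : 'M[R]_m) : Prop :=
  forall i j, 0 <= A i j.

Definition zero_on_edges (n : nat) (e : rel 'I_n) (A : 'M[R]_n) : Prop :=
  forall i j, e i j -> A i j = 0.

Definition sum_entries (n : nat) (A : 'M[R]_n) : R := \sum_i \sum_j A i j.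

Definition border (n : nat) (a : R) (d : 'cV[R]_n) (M : 'M[R]_n) : 'M[R]_(1 + n) :=
  block_mx (a%:M) d^T d M.

Definition diagv (n : nat) (Z : 'M[R]_n) : 'cV[R]_n := \col_i Z i i.

Definition vartheta_k (n : nat) (e : rel 'I_n) (k : nat) : R :=
  sup [set v | exists Z : 'M[R]_n,
     [/\ symmx Z, zero_on_edges e Z, \tr Z = k%:R, psd Z & psd (1%:M - Z)]
     /\ v = sum_entries Z].

Definition vartheta'_k (n : nat) (e : rel 'I_n) (k : nat) : R :=
  sup [set v | exists Z : 'M[R]_n,
     [/\ symmx Z, zero_on_edges e Z, \tr Z = k%:R, psd Z & psd (1%:M - Z)]
     /\ nonneg_mx Z
     /\ v = sum_entries Z].

Definition theta1_k (n : nat) (e : rel 'I_n) (k : nat) : R :=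
  sup [set v | exists Z X : 'M[R]_n,
     [/\ symmx Z, symmx X, zero_on_edges e Z & (forall i, X i i = 0)]
     /\ [/\ nonneg_mx Z, nonneg_mx X, psd (Z - X)
       & psd (border 1 (diagv Z) (Z + (k%:R - 1) *: X))]
     /\ [/\ (forall i j : 'I_n, (j < i)%N ->
               0 <= 1 - Z i i - Z j j + Z i j + (k%:R - 1) * X i j)
           & (forall i j : 'I_n, i != j -> 0 <= Z i i - Z i j - (k%:R - 1) * X i j)]
     /\ v = \tr Z].

Definition theta2_k (n : nat) (e : rel 'I_n) (k : nat) : R :=
  sup [set v | exists Z X : 'M[R]_n,
     [/\ symmx Z, symmx X, zero_on_edges e Z & (forall i, X i i = 0)]
     /\ [/\ nonneg_mx Z, nonneg_mx X, psd (Z - X)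
       & psd (border 1 (diagv Z) (Z + (k%:R - 1) *: X))]
     /\ v = \tr Z].

Definition theta3_k (n : nat) (e : rel 'I_n) (k : nat) : R :=
  sup [set v | exists Z : 'M[R]_n,
     [/\ symmx Z, zero_on_edges e Z, (forall i, Z i i <= 1), nonneg_mx Z
       & psd (border k%:R (diagv Z) Z)]
     /\ v = \tr Z].

End SDP.

From HB Require Import structures.
From mathcomp Require Import all_boot all_order all_algebra.
From mathcomp Require Import classical_sets reals.
From mathcomp Require Import ring lra.
Import Order.TTheory GRing.Theory Num.Theory.

(* Let a = chi(complement of G) and c = chi(G), so that n = a c.  The colour
   classes of an a-colouring g of the complement are a cliques covering V; a
   stable set meets each of them at most once, so alpha(G) <= a, and the c
   stable classes of a c-colouring f of G, which partition n = a c vertices,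
   all have exactly a vertices.  Hence alpha(G) = a and alpha_k(G) = k a.
   Every relaxation is at most k a: testing positive semidefiniteness against
   the indicator vector of a clique Q of the cover bounds the diagonal mass of
   Z on Q by k (Z vanishes on the edges inside Q), and summing over the a
   cliques bounds the trace; the same vectors give <J, Z> <= a tr Z.  The bound
   is attained by the Gram matrix Z = Y Y^T of the indicators Y of the first k
   classes of f (for theta^1 and theta^2 together with X = (b b^T - Z)/(k - 1),
   where b = diag Z), and by Z/a, the orthogonal projection onto the column
   space of Y, for vartheta_k and vartheta'_k. *)

Set Implicit Arguments. Unset Strict Implicit. Unset Printing Implicit Defensive.

Section RealBounds.
Local Open Scope ring_scope.

Lemma sup_eq_greatest (R : realType) (E : set R) x :
  E x -> (forall y, E y -> y <= x) -> sup E = x.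
Proof.
move=> Ex ub; apply/le_anti/andP; split.
  by apply: ge_sup; [exists x | move=> y /ub].
by apply: sup_upper_bound => //; split; [exists x | exists x => y /ub].
Qed.

Lemma sqr_sum_le (R : realDomainType) (I : finType) (P : pred I) (y : I -> R) :
  (\sum_(i in P) y i) ^+ 2 <= #|P|%:R * \sum_(i in P) y i ^+ 2.
Proof.
have : 0 <= \sum_(i in P) \sum_(j in P) (y i - y j) ^+ 2.
  by do 2!apply: sumr_ge0 => ? _; apply: sqr_ge0.
have -> : \sum_(i in P) \sum_(j in P) (y i - y j) ^+ 2 =
    2 * (#|P|%:R * \sum_(i in P) y i ^+ 2 - (\sum_(i in P) y i) ^+ 2).
  transitivity (\sum_(i in P) \sum_(j in P) (y i ^+ 2 + y j ^+ 2 - 2 * (y i * y j))).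
    by apply: eq_bigr => i _; apply: eq_bigr => j _; rewrite sqrrB; ring.
  under eq_bigr => i _ do rewrite sumrB big_split /= sumr_const -!mulr_sumr.
  rewrite sumrB big_split /= sumr_const sumrMnl -mulr_sumr -mulr_suml.
  ring.
by rewrite pmulr_rge0 // subr_ge0.
Qed.

End RealBounds.

Section QuadraticForms.
Local Open Scope ring_scope.
Variable R : realType.

Implicit Types m p : nat.

Definition qform m (A : 'M[R]_m) (x : 'cV[R]_m) : R := (x^T *m A *m x) 0 0.

Lemma qformE m (A : 'M[R]_m) x : qform A x = \sum_i \sum_j x i 0 * A i j * x j 0.
Proof.
rewrite /qform mxE; under eq_bigr => j _ do rewrite !mxE big_distrl /=.
rewrite exchange_big; apply: eq_bigr => i _; apply: eq_bigr => j _.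
by rewrite !mxE.
Qed.

Lemma qformD m (A B : 'M[R]_m) x : qform (A + B) x = qform A x + qform B x.
Proof. by rewrite /qform mulmxDr mulmxDl mxE. Qed.

Lemma qformB m (A B : 'M[R]_m) x : qform (A - B) x = qform A x - qform B x.
Proof. by rewrite /qform mulmxBr mulmxBl !mxE. Qed.

Lemma qformZ m c (A : 'M[R]_m) x : qform (c *: A) x = c * qform A x.
Proof. by rewrite /qform -scalemxAr -scalemxAl mxE. Qed.

Lemma sum_entries_qform m (A : 'M[R]_m) : sum_entries A = qform A (const_mx 1).
Proof.
rewrite qformE; apply: eq_bigr => i _; apply: eq_bigr => j _.
by rewrite !mxE mul1r mulr1.
Qed.

Lemma qform_gram m p (V : 'M[R]_(m, p)) x :
  qform (V *m V^T) x = \sum_t (V^T *m x) t 0 ^+ 2.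
Proof.
rewrite /qform mulmxA -mulmxA -[x^T *m V]trmxK trmx_mul trmxK mxE.
by apply: eq_bigr => t _; rewrite mxE expr2.
Qed.

Lemma psd_gram m p (V : 'M[R]_(m, p)) : psd (V *m V^T).
Proof.
split=> [|x]; first by rewrite /symmx trmx_mul trmxK.
by rewrite -/(qform _ x) qform_gram; apply: sumr_ge0 => t _; apply: sqr_ge0.
Qed.

Lemma psd_sym_idem m (P : 'M[R]_m) : symmx P -> P *m P = P -> psd P.
Proof.
move=> sP idP; have -> : P = P *m P^T by rewrite sP idP.
exact: psd_gram.
Qed.

Lemma psd_1_sub_sym_idem m (P : 'M[R]_m) :
  symmx P -> P *m P = P -> psd (1%:M - P).
Proof.
move=> sP idP; apply: psd_sym_idem.
  by rewrite /symmx raddfB /= tr_scalar_mx sP.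
by rewrite mulmxBl mul1mx mulmxBr mulmx1 idP subrr subr0.
Qed.

Lemma border_gram m p (u : 'rV[R]_p) (V : 'M[R]_(m, p)) :
  col_mx u V *m (col_mx u V)^T = border ((u *m u^T) 0 0) (V *m u^T) (V *m V^T).
Proof. by rewrite tr_col_mx mul_col_row /border -mx11_scalar trmx_mul trmxK. Qed.

Lemma psd_border_gram m p (u : 'rV[R]_p) (V : 'M[R]_(m, p)) :
  psd (border ((u *m u^T) 0 0) (V *m u^T) (V *m V^T)).
Proof. by rewrite -border_gram; apply: psd_gram. Qed.

Lemma qform_border m a (d : 'cV[R]_m) M s y :
  qform (border a d M) (col_mx s%:M y) =
  a * s ^+ 2 + 2 * s * (d^T *m y) 0 0 + qform M y.
Proof.
rewrite /qform /border tr_col_mx tr_scalar_mx mul_row_block mul_row_col !mulmxDl.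
have -> : y^T *m d = (d^T *m y)^T by rewrite trmx_mul trmxK.
rewrite !mul_scalar_mx !mul_mx_scalar -scalemxAl !mxE eqxx mulr1n.
ring.
Qed.

Lemma qform_sum_le (I : finType) m (Z : 'M[R]_m) (v : I -> 'cV[R]_m) :
  psd Z -> qform Z (\sum_q v q) <= #|I|%:R * \sum_q qform Z (v q).
Proof.
(* Expand 0 <= \sum_(q, r) qform Z (v q - v r) by bilinearity. *)
move=> [_ psdZ]; pose b (x y : 'cV[R]_m) := (x^T *m Z *m y) 0 0.
have qformB2 x y : qform Z (x - y) = qform Z x - b x y - b y x + qform Z y.
  have entryB (A B : 'M[R]_1) : (A - B) 0 0 = A 0 0 - B 0 0 by rewrite !mxE.
  rewrite /qform /b [(x - y)^T]raddfB /= !(mulmxBl, mulmxBr) !entryB; ring.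
have qform_sum : qform Z (\sum_q v q) = \sum_q \sum_r b (v q) (v r).
  rewrite /qform /b [(\sum_q v q)^T]raddf_sum !mulmx_suml summxE.
  by apply: eq_bigr => q _; rewrite mulmx_sumr summxE.
have : 0 <= \sum_q \sum_r qform Z (v q - v r).
  by do 2!apply: sumr_ge0 => ? _; apply: psdZ.
under eq_bigr => q _ do under eq_bigr => r _ do rewrite qformB2.
under eq_bigr => q _ do rewrite big_split !sumrB /= sumr_const.
rewrite big_split !sumrB /= sumr_const sumrMnl [X in _ - X + _]exchange_big /=.
rewrite qform_sum -mulr_natl; set S := \sum_q qform Z (v q).
set B := \sum_q \sum_r b (v q) (v r); set N := #|_|%:R; lra.
Qed.
End QuadraticForms.

Lemma card_ord_lt c k : k <= c -> #|[pred t : 'I_c | t < k]| = k.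
Proof.
move=> kc; rewrite -sum1_card (eq_bigl (fun t : 'I_c => t < k)) //.
by rewrite (big_ord_narrow kc) big_const_ord iter_addn_0 mul1n.
Qed.

Lemma colorable_card n (e : rel 'I_n) : irreflexive e -> colorable e n.
Proof.
move=> irr; apply/existsP; exists [ffun i => i].
apply/forallP => i; apply/forallP => j; apply/implyP => /andP[_ eij].
by rewrite !ffunE; apply: contraTneq eij => ->; rewrite irr.
Qed.

Lemma chi_colorable n (e : rel 'I_n) :
  irreflexive e -> colorable e (chi e) /\ chi e <= n.
Proof.
move=> irr; have has_col : has (colorable e) (iota 0 n.+1).
  by apply/hasP; exists n; [rewrite mem_iota add0n ltnSn | exact: colorable_card].
have := nth_find 0 has_col; move: has_col; rewrite has_find size_iota => lt.
by rewrite nth_iota // add0n; split => //; rewrite -ltnS.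
Qed.

Lemma compl_graph_irrefl n (e : rel 'I_n) : irreflexive (compl_graph e).
Proof. by move=> i; rewrite /compl_graph /= eqxx. Qed.

Lemma proper_onT_edge n k (e : rel 'I_n) (f : {ffun 'I_n -> 'I_k}) :
  proper_on e [set: 'I_n] f -> forall i j, e i j -> f i != f j.
Proof. by move=> /forallP fP i j eij; move: (fP i) => /forallP/(_ j); rewrite !inE eij. Qed.

Lemma proper_compl_clique n k (e : rel 'I_n) (g : {ffun 'I_n -> 'I_k}) :
  proper_on (compl_graph e) [set: 'I_n] g -> forall i j, g i = g j -> i != j -> e i j.
Proof.
move=> gP i j gij nij; have := proper_onT_edge gP (i := i) (j := j).
by rewrite /compl_graph /= nij gij eqxx; case: (e i j) => // /(_ isT).
Qed.

Lemma card_fibers n c a (f : {ffun 'I_n -> 'I_c}) :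
  (forall t, #|[set i | f i == t]| = a) ->
  forall P : pred 'I_c, #|[set i | P (f i)]| = #|P| * a.
Proof.
move=> f_equitable P; rewrite -sum1_card (partition_big f P); last first.
  by move=> i; rewrite inE.
rewrite -sum_nat_const; apply: eq_bigr => t Pt; rewrite -(f_equitable t) -sum1_card.
by apply: eq_bigl => i; rewrite !inE; case: (eqVneq (f i) t) => [->|]; rewrite ?Pt ?andbF.
Qed.

Section ColorPartitions.
Variables (n a c : nat) (e : rel 'I_n).
Variables (f : {ffun 'I_n -> 'I_c}) (g : {ffun 'I_n -> 'I_a}).
Hypothesis f_stable : forall i j, e i j -> f i != f j.
Hypothesis g_clique : forall i j, g i = g j -> i != j -> e i j.

Lemma card_stable_le S : stable e S -> #|S| <= a.
Proof.
move=> /forallP stS; have g_inj : {in S &, injective g}.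
  move=> i j iS jS gij; apply: contraTeq isT => nij.
  by move: (stS i) => /forallP/(_ j); rewrite iS jS g_clique.
by rewrite -(card_in_imset g_inj) (leq_trans (max_card _)) ?card_ord.
Qed.

Lemma stable_fiber t : stable e [set i | f i == t].
Proof.
apply/forallP => i; apply/forallP => j; rewrite !inE; apply/implyP => /andP[/eqP fi /eqP fj].
by apply: contraTN isT => /f_stable; rewrite fi fj eqxx.
Qed.

Hypothesis n_eq : n = a * c.

Lemma card_fiber t : #|[set i | f i == t]| = a.
Proof.
have le_a t' := card_stable_le (stable_fiber t').
have sum_fibers : \sum_t #|[set i | f i == t]| = \sum_(t : 'I_c) a.
  rewrite sum_nat_const card_ord mulnC -n_eq -[n in RHS]card_ord -sum1_card.
  rewrite (partition_big f predT) //=; apply: eq_bigr => t' _.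
  by rewrite -sum1_card; apply: eq_bigl => i; rewrite inE.
have := (leqif_sum (fun t' (_ : true) => leqif_eq (le_a t'))).2.
by rewrite sum_fibers eqxx => /esym/forall_inP/(_ t isT)/eqP.
Qed.

Lemma alphaE : 0 < c -> alpha e = a.
Proof.
move=> c_gt0; apply/eqP; rewrite eqn_leq; apply/andP; split.
  by apply/bigmax_leqP => S; apply: card_stable_le.
rewrite -(card_fiber (Ordinal c_gt0)); apply: leq_bigmax_cond; exact: stable_fiber.
Qed.

Lemma alpha_kE k : 0 < k <= c -> alpha_k e k = k * a.
Proof.
case: k => [//|k] /= kc; apply/eqP; rewrite eqn_leq; apply/andP; split.
  apply/bigmax_leqP => S /existsP[h /forallP hP].
  have gh_inj : {in S &, injective (fun i => (g i, h i))}.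
    move=> i j iS jS [gij hij]; apply: contraTeq isT => nij.
    by move: (hP i) => /forallP/(_ j); rewrite iS jS g_clique // hij eqxx.
  rewrite -(card_in_imset gh_inj) (leq_trans (max_card _)) //.
  by rewrite card_prod !card_ord mulnC.
have first_classes : [exists h : {ffun 'I_n -> 'I_k.+1},
    proper_on e [set i | f i < k.+1] h].
  apply/existsP; exists [ffun i => inord (f i)].
  apply/forallP => i; apply/forallP => j; rewrite !inE; apply/implyP.
  move=> /andP[/andP[fi fj] /f_stable]; rewrite !ffunE; apply: contra => /eqP.
  by move/(congr1 val); rewrite /= !inordK // => fij; apply/eqP/val_inj.
have -> : k.+1 * a = #|[set i | f i < k.+1]|.
  by rewrite (card_fibers card_fiber [pred t : 'I_c | t < k.+1]) card_ord_lt.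
exact: (leq_bigmax_cond [set i | f i < k.+1] first_classes).
Qed.
End ColorPartitions.

Section CliqueBounds.
Local Open Scope ring_scope.
Variables (R : realType) (n : nat) (e : rel 'I_n).

Definition ind (Q : {set 'I_n}) : 'cV[R]_n := \col_i (i \in Q)%:R.

Lemma qform_ind_clique (Q : {set 'I_n}) (M : 'M[R]_n) :
  {in Q &, forall i j, i != j -> e i j} -> zero_on_edges e M ->
  qform M (ind Q) = \sum_(i in Q) M i i.
Proof.
move=> Qclique zM; rewrite qformE [RHS]big_mkcond /=; apply: eq_bigr => i _.
case iQ: (i \in Q); last by rewrite big1 // => j _; rewrite !mxE iQ !mul0r.
rewrite (bigD1 i) //= big1 ?addr0 => [|j nji]; rewrite !mxE ?iQ.
  by rewrite mulr1 mul1r.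
case jQ: (j \in Q); last by rewrite mulr0.
by rewrite zM ?mulr0 ?mul0r // Qclique // eq_sym.
Qed.

Lemma diagv_ind (Z : 'M[R]_n) Q : ((diagv Z)^T *m ind Q) 0 0 = \sum_(i in Q) Z i i.
Proof.
rewrite mxE [RHS]big_mkcond /=; apply: eq_bigr => i _.
by rewrite !mxE; case: (i \in Q); rewrite ?mulr1 ?mulr0.
Qed.

Lemma clique_diag_le_border r (Z : 'M[R]_n) (Q : {set 'I_n}) :
  {in Q &, forall i j, i != j -> e i j} -> zero_on_edges e Z ->
  psd (border r (diagv Z) Z) -> \sum_(i in Q) Z i i <= r.
Proof.
move=> Qclique zZ [_ psdB]; have := psdB (col_mx (-1)%:M (ind Q)).
rewrite -/(qform _ _) qform_border diagv_ind qform_ind_clique // sqrrN expr1n.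
lra.
Qed.

Lemma clique_diag_le_border1 r (Z X : 'M[R]_n) (Q : {set 'I_n}) : 1 <= r ->
  {in Q &, forall i j, i != j -> e i j} -> zero_on_edges e Z -> psd (Z - X) ->
  psd (border 1 (diagv Z) (Z + (r - 1) *: X)) -> \sum_(i in Q) Z i i <= r.
Proof.
move=> r_ge1 Qclique zZ [_ psdZX] [_ psdB]; set s := \sum_(i in Q) Z i i.
have := psdZX (ind Q); rewrite -/(qform _ _) qformB qform_ind_clique // -/s.
set x := qform X (ind Q) => s_ge_x.
have := psdB (col_mx (- s)%:M (ind Q)); rewrite -/(qform _ _) qform_border.
rewrite diagv_ind qformD qformZ qform_ind_clique // -/s -/x => hB.
have : 0 <= (r - 1) * (s - x) by apply: mulr_ge0; lra.
nra.
Qed.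

Variables (a : nat) (g : {ffun 'I_n -> 'I_a}).
Hypothesis g_clique : forall i j, g i = g j -> i != j -> e i j.

Lemma fiber_clique q : {in [set i | g i == q] &, forall i j, i != j -> e i j}.
Proof. by move=> i j; rewrite !inE => /eqP gi /eqP gj; apply: g_clique; rewrite gi gj. Qed.

Lemma trace_fibers (Z : 'M[R]_n) :
  \tr Z = \sum_q \sum_(i in [set i | g i == q]) Z i i.
Proof.
rewrite /mxtrace (partition_big g predT) //; apply: eq_bigr => q _.
by apply: eq_bigl => i; rewrite inE.
Qed.

Lemma trace_le_fibers r (Z : 'M[R]_n) :
  (forall q, \sum_(i in [set i | g i == q]) Z i i <= r) -> \tr Z <= a%:R * r.
Proof.
move=> le_r; rewrite trace_fibers; apply: le_trans (ler_sum _ (fun q _ => le_r q)) _.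
by rewrite sumr_const card_ord mulr_natl.
Qed.

Lemma trace_le_border r (Z : 'M[R]_n) :
  zero_on_edges e Z -> psd (border r (diagv Z) Z) -> \tr Z <= a%:R * r.
Proof.
move=> zZ psdB; apply: trace_le_fibers => q.
exact: (clique_diag_le_border (@fiber_clique q) zZ psdB).
Qed.

Lemma trace_le_border1 r (Z X : 'M[R]_n) : 1 <= r -> zero_on_edges e Z ->
  psd (Z - X) -> psd (border 1 (diagv Z) (Z + (r - 1) *: X)) -> \tr Z <= a%:R * r.
Proof.
move=> r_ge1 zZ psdZX psdB; apply: trace_le_fibers => q.
exact: (clique_diag_le_border1 r_ge1 (@fiber_clique q) zZ psdZX psdB).
Qed.

Lemma sum_ind_fibers : \sum_q ind [set i | g i == q] = const_mx 1.
Proof.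
apply/matrixP => i j; rewrite summxE (bigD1 (g i)) //= big1 => [|q ngq].
  by rewrite !mxE inE eqxx addr0.
by rewrite mxE inE eq_sym (negbTE ngq).
Qed.

Lemma sum_entries_le_fibers (Z : 'M[R]_n) :
  zero_on_edges e Z -> psd Z -> sum_entries Z <= a%:R * \tr Z.
Proof.
move=> zZ psdZ; rewrite sum_entries_qform -sum_ind_fibers trace_fibers.
have := qform_sum_le (fun q => ind [set i | g i == q]) psdZ.
by rewrite card_ord (eq_bigr _ (fun q _ => qform_ind_clique (@fiber_clique q) zZ)).
Qed.
End CliqueBounds.

Lemma sumr_indicator (R : pzSemiRingType) (I : finType) (P : pred I) :
  (\sum_i (P i)%:R = #|P|%:R :> R)%R.
Proof.
rewrite -sum1_card natr_sum [RHS]big_mkcond /=.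
by apply: eq_bigr => i _; have -> : (i \in P) = P i by []; case: (P i).
Qed.

Section FirstClasses.
Local Open Scope ring_scope.
Variables (R : realType) (n a c k : nat) (e : rel 'I_n) (f : {ffun 'I_n -> 'I_c}).
Hypothesis f_stable : forall i j, e i j -> f i != f j.
Hypothesis f_equitable : forall t, #|[set i | f i == t]| = a.
Hypothesis k_le_c : (k <= c)%N.

Definition class_ind : 'M[R]_(n, c) := \matrix_(i, t) ((f i == t) && (t < k)%N)%:R.
Definition first_cols : 'rV[R]_c := \row_t (t < k)%N%:R.
Definition first_verts : 'cV[R]_n := \col_i (f i < k)%N%:R.
Definition class_gram : 'M[R]_n := class_ind *m class_ind^T.

Lemma sum_fiber t : \sum_i ((f i == t)%:R : R) = a%:R.
Proof.
rewrite sumr_indicator -(f_equitable t); congr _%:R.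
by apply: eq_card => i; rewrite inE.
Qed.

Lemma class_gramE i j : class_gram i j = ((f i == f j) && (f i < k)%N)%:R.
Proof.
rewrite !mxE (bigD1 (f i)) //= big1 ?addr0 => [|t nt]; rewrite !mxE.
  rewrite eqxx [f j == f i]eq_sym.
  by case: (f i == f j); case: (f i < k)%N; rewrite /= ?mul1r ?mul0r.
by rewrite eq_sym (negbTE nt) mul0r.
Qed.

Lemma diagv_class_gram : diagv class_gram = first_verts.
Proof. by apply/colP => i; rewrite [LHS]mxE class_gramE eqxx mxE. Qed.

Lemma class_ind_first_cols : class_ind *m first_cols^T = first_verts.
Proof.
apply/colP => i; rewrite !mxE (bigD1 (f i)) //= big1 ?addr0 => [|t nt]; rewrite !mxE.
  by rewrite eqxx; case: (f i < k)%N; rewrite ?mulr1 ?mul0r.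
by rewrite eq_sym (negbTE nt) mul0r.
Qed.

Lemma first_cols_norm : (first_cols *m first_cols^T) 0 0 = k%:R.
Proof.
rewrite mxE -(card_ord_lt k_le_c) -sumr_indicator.
by apply: eq_bigr => t _; rewrite !mxE /=; case: (t < k)%N; rewrite ?mulr1 ?mulr0.
Qed.

Lemma trace_class_gram : \tr class_gram = (k * a)%:R.
Proof.
rewrite /mxtrace (eq_bigr (fun i => (f i < k)%N%:R)) => [|i _]; last first.
  by rewrite class_gramE eqxx.
rewrite sumr_indicator (eq_card (B := [set i | f i < k]%N)) => [|i]; last by rewrite !inE.
by rewrite (card_fibers f_equitable [pred t : 'I_c | t < k]%N) card_ord_lt.
Qed.

Lemma sum_entries_class_gram : sum_entries class_gram = a%:R * \tr class_gram.
Proof.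
rewrite /sum_entries /mxtrace mulr_sumr; apply: eq_bigr => i _.
rewrite (eq_bigr (fun j => (f j == f i)%:R * (f i < k)%N%:R)) => [|j _]; last first.
  by rewrite class_gramE -mulnb natrM eq_sym.
by rewrite -mulr_suml sum_fiber class_gramE eqxx.
Qed.

Lemma class_gram_sqr : class_gram *m class_gram = a%:R *: class_gram.
Proof.
apply/matrixP => i j; rewrite [LHS]mxE [RHS]mxE class_gramE.
have term l : class_gram i l * class_gram l j =
    (f l == f i)%:R * ((f i == f j) && (f i < k)%N)%:R.
  rewrite !class_gramE; case: (eqVneq (f l) (f i)) => [->|nli].
    by case: (f i < k)%N; rewrite /= ?mul0r ?mul1r ?andbF.
  by rewrite /= !mul0r.
by rewrite (eq_bigr _ (fun l _ => term l)) -mulr_suml sum_fiber.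
Qed.

Lemma class_gram_sym : symmx class_gram.
Proof. by rewrite /symmx trmx_mul trmxK. Qed.

Lemma class_gram_zero_on_edges : zero_on_edges e class_gram.
Proof. by move=> i j /f_stable fij; rewrite class_gramE (negbTE fij). Qed.

Lemma class_gram_nonneg : nonneg_mx class_gram.
Proof. by move=> i j; rewrite class_gramE ler0n. Qed.

Lemma class_gram_diag_le1 i : class_gram i i <= 1.
Proof. by rewrite class_gramE; case: (_ && _). Qed.

Hypothesis a_gt0 : (0 < a)%N.

Definition vartheta_point : 'M[R]_n := a%:R^-1 *: class_gram.

Lemma vartheta_point_idem : vartheta_point *m vartheta_point = vartheta_point.
Proof.
have a_neq0 : a%:R != 0 :> R by rewrite pnatr_eq0 -lt0n.
by rewrite -scalemxAl -scalemxAr class_gram_sqr !scalerA mulfVK.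
Qed.

Lemma vartheta_point_feasible :
  [/\ symmx vartheta_point, zero_on_edges e vartheta_point,
      \tr vartheta_point = k%:R, psd vartheta_point & psd (1%:M - vartheta_point)]
  /\ nonneg_mx vartheta_point /\ sum_entries vartheta_point = (k * a)%:R.
Proof.
have a_neq0 : a%:R != 0 :> R by rewrite pnatr_eq0 -lt0n.
have symV : symmx vartheta_point by rewrite /symmx linearZ /= class_gram_sym.
split; [split=> // | split].
- by move=> i j eij; rewrite mxE class_gram_zero_on_edges ?mulr0.
- by rewrite mxtraceZ trace_class_gram natrM mulrC mulfK.
- exact: (psd_sym_idem symV vartheta_point_idem).
- exact: (psd_1_sub_sym_idem symV vartheta_point_idem).
- by move=> i j; rewrite mxE mulr_ge0 ?invr_ge0 ?ler0n ?class_gram_nonneg.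
rewrite sum_entries_qform qformZ -sum_entries_qform sum_entries_class_gram.
by rewrite mulKf // trace_class_gram.
Qed.

Lemma theta3_point_feasible :
  [/\ symmx class_gram, zero_on_edges e class_gram, (forall i, class_gram i i <= 1),
      nonneg_mx class_gram & psd (border k%:R (diagv class_gram) class_gram)].
Proof.
split; [exact: class_gram_sym | exact: class_gram_zero_on_edges |
        exact: class_gram_diag_le1 | exact: class_gram_nonneg |].
rewrite diagv_class_gram -class_ind_first_cols -first_cols_norm.
exact: psd_border_gram.
Qed.

Hypothesis k_gt0 : (0 < k)%N.

(* Chosen so that class_gram + (k - 1) theta1_X = first_verts first_verts^T is
   rank one.  For k = 1 the division by zero makes theta1_X = 0, and then
   class_gram is already that rank-one matrix. *)
Definition theta1_X : 'M[R]_n :=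
  (k%:R - 1)^-1 *: (first_verts *m first_verts^T - class_gram).

Lemma first_verts_outerE i j :
  (first_verts *m first_verts^T) i j = (f i < k)%N%:R * (f j < k)%N%:R.
Proof. by rewrite mxE big_ord1 !mxE. Qed.

Lemma theta1_XE i j : theta1_X i j =
  (k%:R - 1)^-1 * ((f i < k)%N%:R * (f j < k)%N%:R - class_gram i j).
Proof. by rewrite -first_verts_outerE /theta1_X !mxE. Qed.

Lemma class_gram_add_theta1_X :
  class_gram + (k%:R - 1) *: theta1_X = first_verts *m first_verts^T.
Proof.
have [k1|k_neq1] := eqVneq k 1%N; last first.
  have k1_neq0 : k%:R - 1 != 0 :> R by rewrite subr_eq0 pnatr_eq1.
  by rewrite /theta1_X scalerA mulfV // scale1r addrC subrK.
rewrite /theta1_X k1 subrr scale0r addr0; apply/matrixP => i j.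
rewrite first_verts_outerE class_gramE k1 -natrM mulnb; congr (nat_of_bool _)%:R.
by rewrite -val_eqE; case: (f i) => [[|x] ?]; case: (f j) => [[|y] ?] //=; rewrite andbF.
Qed.

Lemma class_gram_add_theta1_XE i j :
  class_gram i j + (k%:R - 1) * theta1_X i j = (f i < k)%N%:R * (f j < k)%N%:R.
Proof.
by rewrite -first_verts_outerE -class_gram_add_theta1_X !mxE.
Qed.

Lemma theta1_X_sym : symmx theta1_X.
Proof.
by rewrite /symmx /theta1_X linearZ /= raddfB /= trmx_mul trmxK class_gram_sym.
Qed.

Lemma theta1_X_diag i : theta1_X i i = 0.
Proof.
by rewrite theta1_XE class_gramE eqxx; case: (f i < k)%N; rewrite /= ?mulr1 ?mulr0 ?subrr ?mulr0.
Qed.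

Lemma theta1_X_nonneg : nonneg_mx theta1_X.
Proof.
move=> i j; rewrite theta1_XE mulr_ge0 ?invr_ge0 ?subr_ge0 ?ler1n //.
rewrite class_gramE; case: (eqVneq (f i) (f j)) => [->|_] /=.
  by case: (f j < k)%N; rewrite /= ?mulr1 ?mulr0.
by rewrite mulr_ge0 ?ler0n.
Qed.

Lemma qform_first_verts x : qform (first_verts *m first_verts^T) x =
  (\sum_(t in [pred t : 'I_c | (t < k)%N]) (class_ind^T *m x) t 0) ^+ 2.
Proof.
rewrite -class_ind_first_cols qform_gram big_ord1 trmx_mul trmxK -mulmxA mxE.
rewrite [in RHS]big_mkcond /=; congr (_ ^+ 2); apply: eq_bigr => t _.
by rewrite !mxE inE; case: (t < k)%N; rewrite ?mul1r ?mul0r.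
Qed.

Lemma qform_first_verts_le x :
  qform (first_verts *m first_verts^T) x <= k%:R * qform class_gram x.
Proof.
rewrite qform_first_verts qform_gram; apply: le_trans (sqr_sum_le _ _) _.
rewrite card_ord_lt // ler_wpM2l // [X in _ <= X](bigID [pred t : 'I_c | (t < k)%N]).
by rewrite lerDl sumr_ge0 // => t _; apply: sqr_ge0.
Qed.

Lemma psd_class_gram_sub_theta1_X : psd (class_gram - theta1_X).
Proof.
split=> [|x]; first by rewrite /symmx raddfB /= class_gram_sym theta1_X_sym.
change (0 <= qform (class_gram - theta1_X) x).
have [k1|k_neq1] := eqVneq k 1%N.
  by rewrite /theta1_X k1 subrr invr0 scale0r subr0; apply: (psd_gram class_ind).2.
have k1_gt0 : 0 < k%:R - 1 :> R by rewrite subr_gt0 ltr1n ltn_neqAle eq_sym k_neq1.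
rewrite qformB /theta1_X qformZ qformB; set qZ := qform class_gram x.
have := qform_first_verts_le x; rewrite -/qZ; set qB := qform _ x => qB_le.
rewrite subr_ge0 -(ler_pM2l k1_gt0) mulrA mulfV ?gt_eqF // mul1r mulrBl mul1r.
lra.
Qed.

Lemma psd_border_theta1 :
  psd (border 1 (diagv class_gram) (class_gram + (k%:R - 1) *: theta1_X)).
Proof.
rewrite class_gram_add_theta1_X diagv_class_gram.
have := psd_border_gram (1%:M : 'rV[R]_1) first_verts.
by rewrite trmx1 !mulmx1 mxE eqxx mulr1n.
Qed.

Lemma theta1_point_feasible :
  [/\ symmx class_gram, symmx theta1_X, zero_on_edges e class_gram
    & (forall i, theta1_X i i = 0)]
  /\ [/\ nonneg_mx class_gram, nonneg_mx theta1_X, psd (class_gram - theta1_X)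
    & psd (border 1 (diagv class_gram) (class_gram + (k%:R - 1) *: theta1_X))]
  /\ [/\ (forall i j : 'I_n, (j < i)%N -> 0 <= 1 - class_gram i i - class_gram j j
              + class_gram i j + (k%:R - 1) * theta1_X i j)
    & (forall i j : 'I_n, i != j ->
         0 <= class_gram i i - class_gram i j - (k%:R - 1) * theta1_X i j)].
Proof.
split; first by split; [exact: class_gram_sym | exact: theta1_X_sym |
  exact: class_gram_zero_on_edges | exact: theta1_X_diag].
split; first by split; [exact: class_gram_nonneg | exact: theta1_X_nonneg |
  exact: psd_class_gram_sub_theta1_X | exact: psd_border_theta1].
split=> i j _.
  rewrite -addrA class_gram_add_theta1_XE !class_gramE !eqxx.
  by case: (f i < k)%N; case: (f j < k)%N; rewrite /= ?mulr0 ?mulr1; lra.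
rewrite -addrA -opprD class_gram_add_theta1_XE class_gramE eqxx.
by case: (f i < k)%N; case: (f j < k)%N; rewrite /= ?mulr0 ?mulr1; lra.
Qed.
End FirstClasses.

Section SDPValues.
Local Open Scope ring_scope.
Variables (R : realType) (n a c k : nat) (e : rel 'I_n).
Variables (f : {ffun 'I_n -> 'I_c}) (g : {ffun 'I_n -> 'I_a}).
Hypothesis f_stable : forall i j, e i j -> f i != f j.
Hypothesis g_clique : forall i j, g i = g j -> i != j -> e i j.
Hypothesis f_equitable : forall t, #|[set i | f i == t]| = a.
Hypotheses (a_gt0 : (0 < a)%N) (k_gt0 : (0 < k)%N) (k_le_c : (k <= c)%N).

Lemma vartheta_kE : vartheta_k R e k = (k * a)%:R.
Proof.
apply: sup_eq_greatest.
  have [? [_ ?]] := vartheta_point_feasible R f_stable f_equitable k_le_c a_gt0.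
  by exists (vartheta_point R a k f).
move=> _ [Z [[_ zZ trZ psdZ _] ->]].
by rewrite natrM mulrC -trZ; exact: (sum_entries_le_fibers g_clique zZ psdZ).
Qed.

Lemma vartheta'_kE : vartheta'_k R e k = (k * a)%:R.
Proof.
apply: sup_eq_greatest.
  have [? [? ?]] := vartheta_point_feasible R f_stable f_equitable k_le_c a_gt0.
  by exists (vartheta_point R a k f).
move=> _ [Z [[_ zZ trZ psdZ _] [_ ->]]].
by rewrite natrM mulrC -trZ; exact: (sum_entries_le_fibers g_clique zZ psdZ).
Qed.

Lemma theta1_kE : theta1_k R e k = (k * a)%:R.
Proof.
apply: sup_eq_greatest.
  exists (class_gram R k f), (theta1_X R k f).
  have [? [? ?]] := theta1_point_feasible R f_stable k_le_c k_gt0.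
  by do 3!split=> //; rewrite (trace_class_gram R f_equitable k_le_c).
move=> _ [Z [X [[_ _ zZ _] [[_ _ psdZX psdB] [_ ->]]]]].
by rewrite natrM mulrC; apply: (trace_le_border1 g_clique _ zZ psdZX psdB); rewrite ler1n.
Qed.

Lemma theta2_kE : theta2_k R e k = (k * a)%:R.
Proof.
apply: sup_eq_greatest.
  exists (class_gram R k f), (theta1_X R k f).
  have [? [? _]] := theta1_point_feasible R f_stable k_le_c k_gt0.
  by do 2!split=> //; rewrite (trace_class_gram R f_equitable k_le_c).
move=> _ [Z [X [[_ _ zZ _] [[_ _ psdZX psdB] ->]]]].
by rewrite natrM mulrC; apply: (trace_le_border1 g_clique _ zZ psdZX psdB); rewrite ler1n.
Qed.

Lemma theta3_kE : theta3_k R e k = (k * a)%:R.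
Proof.
apply: sup_eq_greatest.
  exists (class_gram R k f); split; first exact: (theta3_point_feasible R f_stable k_le_c).
  by rewrite (trace_class_gram R f_equitable k_le_c).
move=> _ [Z [[_ zZ _ _ psdB] ->]].
by rewrite natrM mulrC; exact: (trace_le_border g_clique zZ psdB).
Qed.

Lemma sdp_values :
  [/\ vartheta_k R e k = (k * a)%:R, vartheta'_k R e k = (k * a)%:R,
      theta1_k R e k = (k * a)%:R, theta2_k R e k = (k * a)%:R
    & theta3_k R e k = (k * a)%:R].
Proof.
by split; [exact: vartheta_kE | exact: vartheta'_kE | exact: theta1_kE |
           exact: theta2_kE | exact: theta3_kE].
Qed.
End SDPValues.

Unset Implicit Arguments.
Local Open Scope ring_scope.

Theorem proposition1 (R : realType) (n : nat) (e : rel 'I_n) :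
  simple_graph e ->
  n = (chi (compl_graph e) * chi e)%N ->
  forall k : nat, (1 <= k <= chi e)%N ->
    [/\ vartheta_k R e k = vartheta'_k R e k,
        vartheta'_k R e k = theta1_k R e k,
        theta1_k R e k = theta2_k R e k,
        theta2_k R e k = theta3_k R e k &
        theta3_k R e k = (k * alpha e)%:R] /\
    (k * alpha e)%N = alpha_k e k.
Proof.
move=> [_ irr] n_eq k /andP[k_gt0 k_le_c].
have [/existsP[f fP] c_le_n] := chi_colorable irr.
have [/existsP[g gP] _] := chi_colorable (compl_graph_irrefl e).
move: f fP g gP k_le_c n_eq c_le_n.
set a := chi (compl_graph e); set c := chi e => f fP g gP k_le_c n_eq c_le_n.
have f_stable := proper_onT_edge fP.
have g_clique := proper_compl_clique gP.
have c_gt0 : (0 < c)%N := leq_trans k_gt0 k_le_c.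
have a_gt0 : (0 < a)%N.
  by rewrite lt0n; apply: contraTneq c_le_n => a0; rewrite n_eq a0 mul0n -ltnNge.
have f_equitable := card_fiber f_stable g_clique n_eq.
rewrite (alphaE f_stable g_clique n_eq c_gt0).
rewrite (alpha_kE f_stable g_clique n_eq (k := k)) ?k_gt0 //.
by have [-> -> -> -> ->] := sdp_values R f_stable g_clique f_equitable a_gt0 k_gt0 k_le_c.
Qed.
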